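(* Let $p$ be a prime and $G=C_p\times C_p$. Then there are exactly $2^{p+2}+p+1$ $G$-transfer systems. Moreover, the lattice $\mathrm{Tr}(G)$ (ordered by inclusion of relations) is the disjoint union of three subsets $B$, $M$, $T$ where $B$ and $T$ are each (as subposets) isomorphic to the Boolean lattice $[1]^{p+1}$, $M$ consists of $p+1$ elements, and the covering relations of $\mathrm{Tr}(G)$ are exactly the covering relations internal to $B$, the covering relations internal to $T$, and the following: (i) the $p+1$ elements of $B$ covered by $\max B$ are put in bijection with the elements of $M$, and each element of $M$ covers exactly its corresponding element of $B$; (ii) the $p+1$ elements of $T$ covering $\min T$ are put in bijection with the elements of $M$, and each such element of $T$ covers exactly its corresponding element of $M$; (iii) $\min T$ covers $\max B$.
   Context: For a finite lattice $(P,\le)$, a transfer system on $P$ is a partial order $R$ on $P$ refining $\le$ (i.e. $x\,R\,y\Rightarrow x\le y$) that is closed under restriction: if $x\,R\,z$ and $y\le z$ then $(x\wedge y)\,R\,y$. For a finite group $G$, a $G$-transfer system is a transfer system on the subgroup lattice $\mathrm{Sub}(G)$ that is moreover closed under conjugation (if $H\,R\,K$ then $gHg^{-1}\,R\,gKg^{-1}$ for all $g\in G$). $\mathrm{Tr}(G)$ denotes the set of $G$-transfer systems, partially ordered by $R\le R'$ iff every relation of $R$ is a relation of $R'$; it is a lattice. *)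

From mathcomp Require Import all_boot all_fingroup all_algebra all_solvable.
Set Implicit Arguments. Unset Strict Implicit. Unset Printing Implicit Defensive.
Local Open Scope group_scope.

Notation grel_on gT := {set ({group gT} * {group gT})}.

Section TransferSystems.
Variable gT : finGroupType.
Implicit Types (G H K L : {group gT}) (R : grel_on gT).

(* R is a G-transfer system: a partial order on Sub(G) refining inclusion
   (reflexive on Sub(G), transitive; antisymmetry follows from refinement),
   closed under restriction and under conjugation by elements of G. *)
Definition is_transfer_system G R : bool :=
  [&& [forall H : {group gT}, forall K : {group gT}, ((H, K) \in R) ==> (H \subset K) && (K \subset G)],
      [forall H : {group gT}, (H \subset G) ==> ((H, H) \in R)],
      [forall H : {group gT}, forall K : {group gT}, forall L : {group gT},
         ((H, K) \in R) && ((K, L) \in R) ==> ((H, L) \in R)],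
      [forall H : {group gT}, forall K : {group gT}, forall L : {group gT},
         ((H, K) \in R) && (L \subset K) ==> (((H :&: L)%G, L) \in R)]
    & [forall H : {group gT}, forall K : {group gT}, forall g in G,
         ((H, K) \in R) ==> (((H :^ g)%G, (K :^ g)%G) \in R)]].

Definition Tr G : {set grel_on gT} := [set R | is_transfer_system G R].

End TransferSystems.

Definition covin (A : finType) (S : {set {set A}}) (X Y : {set A}) : bool :=
  [&& X \in S, Y \in S, X \proper Y &
      [forall Z in S, ~~ ((X \proper Z) && (Z \proper Y))]].

From mathcomp Require Import all_boot all_fingroup all_algebra all_solvable.
Set Implicit Arguments. Unset Strict Implicit. Unset Printing Implicit Defensive.
Local Open Scope group_scope.

(* The subgroup lattice of G = C_p x C_p consists of 1, G and the p+1 lines c_i,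
   which pairwise meet in 1.  As G is abelian, conjugation closure is automatic,
   so a transfer system is the diagonal plus a choice of transfers 1 -> c_i
   (i in S), 1 -> G (flag b) and c_i -> G (i in U); restriction and transitivity
   cut the admissible triples (S, U, b) down to three families: U empty and b
   false (B, indexed by S), a single c_i -> G with all 1 -> c_j, j <> i (M), and
   b true with S full (T, indexed by U).  Inclusion of transfer systems is
   componentwise inclusion of the triples, B is a down-set and T an up-set of
   Tr(G), and the covering relations are read off from this description. *)

Section ElementaryAbelianOfRankTwo.
Variable p : nat.
Hypothesis p_pr : prime p.

Lemma expg_Zp_prime (z : 'Z_p) : z ^+ p = 1.
Proof.
have card_Zp : #|[set: 'Z_p]| = p by rewrite cardsT card_ord Zp_cast ?prime_gt1.
by rewrite -[X in z ^+ X]card_Zp expg_cardG ?inE.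
Qed.

Lemma abelem_Zp2 : p.-abelem [set: 'Z_p * 'Z_p].
Proof.
apply/(abelemP p_pr); split.
  by apply/centsP=> [[a b] _ [a' b'] _]; congr pair; apply: val_inj; rewrite /= addnC.
move=> [a b] _; have -> : forall n, (a, b) ^+ n = (a ^+ n, b ^+ n).
  by elim=> // n IHn; rewrite !expgS IHn.
by rewrite !expg_Zp_prime.
Qed.

Lemma p2Elem_isog_Zp2 (gT : finGroupType) (G : {group gT}) :
  G \isog [set: 'Z_p * 'Z_p] -> G \in 'E_p^2(G).
Proof.
move=> isoG; have := abelem_Zp2; rewrite -(isog_abelem isoG) => abelG.
apply/pnElemP; split=> //.
by rewrite (card_isog isoG) cardsT card_prod card_ord Zp_cast ?prime_gt1 // mulnn pfactorK.
Qed.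

End ElementaryAbelianOfRankTwo.

Section SubgroupsOfRankTwo.
Variables (gT : finGroupType) (p : nat) (A E : {group gT}).
Hypothesis E_p2 : E \in 'E_p^2(A).

Lemma p2Elem_subgroups (H : {group gT}) :
  H \subset E -> [\/ H = 1%G, H = E | H \in 'E_p^1(E)].
Proof.
have p_pr := pnElem_prime E_p2; have [_ _ oE] := pnElemPcard E_p2.
move=> sHE; have := cardSg sHE; rewrite oE => /(dvdn_pfactor _ _ p_pr)[[|[|[|m]]] //] _ oH.
- by constructor 1; apply/val_inj/eqP; rewrite /= trivg_card1 oH.
- by constructor 3; rewrite p1ElemE // !inE sHE oH /=.
- by constructor 2; apply/val_inj/eqP; rewrite /= eqEcard sHE oE oH leqnn.
Qed.

Lemma p1Elem_p2Elem_neq (X : {group gT}) : X \in 'E_p^1(E) -> X :!=: E.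
Proof.
have p_gt1 := prime_gt1 (pnElem_prime E_p2).
move=> /card_p1Elem oX; apply: contraTneq isT => XE.
by move: (card_pnElem E_p2); rewrite -XE oX -{1}(expn1 p) => /eqP; rewrite eqn_exp2l.
Qed.

End SubgroupsOfRankTwo.

Lemma transfer_systemP (gT : finGroupType) (G : {group gT}) (R : grel_on gT) :
  reflect
    [/\ forall H K : {group gT}, (H, K) \in R -> (H \subset K) && (K \subset G),
        forall H : {group gT}, H \subset G -> (H, H) \in R,
        forall H K L : {group gT}, (H, K) \in R -> (K, L) \in R -> (H, L) \in R,
        forall H K L : {group gT}, (H, K) \in R -> L \subset K -> ((H :&: L)%G, L) \in R
      & forall (H K : {group gT}) g, g \in G -> (H, K) \in R -> ((H :^ g)%G, (K :^ g)%G) \in R]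
    (R \in Tr G).
Proof.
rewrite inE; apply: (iffP and5P) => [[/'forall_forallP sR /forallP reflR
    /'forall_'forall_forallP transR /'forall_'forall_forallP restrR
    /'forall_'forall_forall_inP conjR] | [sR reflR transR restrR conjR]].
  split=> [H K | H | H K L hHK hKL | H K L hHK sLK | H K g Gg].
  - exact/implyP/sR.
  - exact/implyP/reflR.
  - by apply: (implyP (transR H K L)); rewrite hHK.
  - by apply: (implyP (restrR H K L)); rewrite hHK.
  - exact/implyP/conjR.
split.
- by apply/'forall_forallP=> H K; apply/implyP/sR.
- by apply/forallP=> H; apply/implyP/reflR.
- by apply/'forall_'forall_forallP=> H K L; apply/implyP=> /andP[]; apply: transR.
- by apply/'forall_'forall_forallP=> H K L; apply/implyP=> /andP[]; apply: restrR.
- by apply/'forall_'forall_forall_inP=> H K g Gg; apply/implyP/conjR.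
Qed.

Lemma card_set (T : finType) : #|{set T}| = (2 ^ #|T|)%N.
Proof. by rewrite -[#|{set T}|]cardsT -powersetT card_powerset cardsT. Qed.

Section Covering.
Variable A : finType.
Implicit Types (S D : {set {set A}}) (X Y Z : {set A}).

Lemma covinP S X Y :
  reflect [/\ X \in S, Y \in S, X \proper Y &
             forall Z, Z \in S -> X \proper Z -> ~~ (Z \proper Y)]
          (covin S X Y).
Proof.
apply: (iffP and4P) => [[XS YS pXY /forall_inP noZ] | [XS YS pXY noZ]]; split=> //.
  by move=> Z ZS pXZ; have := noZ Z ZS; rewrite pXZ.
by apply/forall_inP=> Z ZS; case pXZ: (X \proper Z); rewrite //= noZ.
Qed.

Lemma covin_interval S D X Y : D \subset S ->
    (forall Z, Z \in S -> X \subset Z -> Z \subset Y -> Z \in D) ->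
  covin S X Y = covin D X Y.
Proof.
move=> sDS intD; apply/covinP/covinP => [[XS YS pXY noZ] | [XD YD pXY noZ]].
  have sXY := proper_sub pXY.
  by split=> // [||Z /(subsetP sDS)]; [apply: intD | apply: intD | apply: noZ].
split=> [||//|Z ZS pXZ]; try exact: (subsetP sDS).
apply/negP=> pZY; have := noZ Z (intD Z ZS (proper_sub pXZ) (proper_sub pZY)) pXZ.
by rewrite pZY.
Qed.

End Covering.

Section DiamondTransferSystems.
Variables (gT : finGroupType) (G : {group gT}) (n : nat) (c : 'I_n -> {group gT}).
Hypotheses (abelG : abelian G) (ntG : G != 1%G) (sub_cG : forall i, c i \subset G)
  (ntc : forall i, c i != 1%G) (c_neqG : forall i, c i != G)
  (tiC : forall i j, i != j -> c i :&: c j = 1)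
  (subgroupsG : forall H : {group gT}, H \subset G ->
     [\/ H = 1%G, H = G | exists i, H = c i]).
Implicit Types (S U : {set 'I_n}) (b : bool) (H K L : {group gT}) (R : grel_on gT).

Lemma c_inj : injective c.
Proof.
move=> i j cij; apply/eqP/negPn/negP => /tiC; rewrite cij setIid => cj1.
by case/negP: (ntc j); apply/eqP/val_inj.
Qed.

Lemma G_notin_c S : (G \in c @: S) = false.
Proof. by apply/negbTE/imsetP=> [[i _ Gci]]; move: (c_neqG i); rewrite -Gci eqxx. Qed.

Lemma one_notin_c S : (1%G \in c @: S) = false.
Proof. by apply/negbTE/imsetP=> [[i _ ci1]]; move: (ntc i); rewrite -ci1 eqxx. Qed.

Lemma subgroups_c H i : H \subset c i -> H = 1%G \/ H = c i.
Proof.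
move=> sHc; have [->|HG|[j Hj]] := subgroupsG (subset_trans sHc (sub_cG i)).
- by left.
- by have := c_neqG i; rewrite -val_eqE /= eqEsubset sub_cG -HG sHc.
have [<-|ji] := eqVneq j i; first by right.
by left; apply/val_inj; rewrite /= -(tiC ji) -Hj; apply/esym/setIidPl.
Qed.

Definition trans_rel S U b : grel_on gT :=
  [set x : {group gT} * {group gT} |
     [|| (x.1 == x.2) && (x.1 \subset G), (x.1 == 1%G) && (x.2 \in c @: S),
         [&& b, x.1 == 1%G & x.2 == G] | (x.1 \in c @: U) && (x.2 == G)]].

Lemma trans_rel_sub S U b H K :
  (H, K) \in trans_rel S U b -> (H \subset K) && (K \subset G).
Proof.
rewrite inE /= => /or4P[/andP[/eqP-> ->] | /andP[/eqP-> /imsetP[i _ ->]] |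
                        /and3P[_ /eqP-> /eqP->] | /andP[/imsetP[i _ ->] /eqP->]].
all: by rewrite ?subxx ?sub1G ?sub_cG.
Qed.

Lemma trans_rel_refl S U b H : H \subset G -> (H, H) \in trans_rel S U b.
Proof. by move=> sHG; rewrite inE /= eqxx sHG. Qed.

Lemma trans_rel_1 S U b K :
  ((1%G, K) \in trans_rel S U b) = [|| K == 1%G, K \in c @: S | b && (K == G)].
Proof. by rewrite inE /= one_notin_c eqxx sub1G andbT /= orbF eq_sym; case: b. Qed.

Lemma trans_rel_c S U b i K :
  ((c i, K) \in trans_rel S U b) = (K == c i) || (i \in U) && (K == G).
Proof.
by rewrite inE /= (mem_imset _ _ c_inj) eq_sym sub_cG (negbTE (ntc i)) andbT andbF.
Qed.

Lemma trans_rel_G S U b K : ((G, K) \in trans_rel S U b) = (K == G).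
Proof. by rewrite inE /= G_notin_c (negbTE ntG) subxx andbT andbF eq_sym orbF. Qed.

Lemma trans_rel_1c S U b i : ((1%G, c i) \in trans_rel S U b) = (i \in S).
Proof.
by rewrite trans_rel_1 (negbTE (ntc i)) (mem_imset _ _ c_inj) (negbTE (c_neqG i)) andbF orbF.
Qed.

Lemma trans_rel_1G S U b : ((1%G, G) \in trans_rel S U b) = b.
Proof. by rewrite trans_rel_1 (negbTE ntG) G_notin_c eqxx andbT. Qed.

Lemma trans_rel_cG S U b i : ((c i, G) \in trans_rel S U b) = (i \in U).
Proof. by rewrite trans_rel_c eq_sym (negbTE (c_neqG i)) eqxx andbT. Qed.

Lemma trans_rel_subset S U b S' U' b' :
  (trans_rel S U b \subset trans_rel S' U' b') = [&& S \subset S', U \subset U' & b ==> b'].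
Proof.
apply/subsetP/and3P => [sR | [sS sU bb']].
  split.
  - by apply/subsetP=> i; rewrite -(trans_rel_1c S U b i) -(trans_rel_1c S' U' b'); apply: sR.
  - by apply/subsetP=> i; rewrite -(trans_rel_cG S U b i) -(trans_rel_cG S' U' b'); apply: sR.
  - by apply/implyP; rewrite -(trans_rel_1G S U b) -(trans_rel_1G S' U' b'); apply: sR.
move=> [H K]; rewrite !inE /=.
case/or4P=> [-> // | /andP[-> /(subsetP (imsetS c sS)) ->] |
             /and3P[/(implyP bb') -> -> ->] | /andP[/(subsetP (imsetS c sU)) -> ->]].
all: by rewrite ?orbT.
Qed.

Lemma trans_rel_inj S U b S' U' b' :
  trans_rel S U b = trans_rel S' U' b' -> [/\ S = S', U = U' & b = b'].
Proof.
move=> eR; have := trans_rel_subset S U b S' U' b'; have := trans_rel_subset S' U' b' S U b.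
rewrite eR subxx => /esym/and3P[sS' sU' bb] /esym/and3P[sS sU bb'].
split; [by apply/eqP; rewrite eqEsubset sS sS' | by apply/eqP; rewrite eqEsubset sU sU' | ].
by case: b b' {eR} bb bb' => [] [].
Qed.

(* The three conditions come from restricting [1 -> G] to each [c j], restricting
   [c i -> G] to [c j] (as [c i :&: c j = 1]), and composing [1 -> c i -> G]. *)
Definition trans_admissible S U b : Prop :=
  [/\ b -> S = setT, forall i j, i \in U -> j != i -> j \in S
    & forall i, i \in U -> i \in S -> b].

Definition low_transfers R := [set i | (1%G, c i) \in R].
Definition up_transfers R := [set i | (c i, G) \in R].

Lemma Tr_admissible R : R \in Tr G ->
  trans_admissible (low_transfers R) (up_transfers R) ((1%G, G) \in R).
Proof.
case/transfer_systemP=> _ _ transR restrR _.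
have restr1 H i : (H, G) \in R -> (H :&: c i)%G = 1%G -> (1%G, c i) \in R.
  by move=> hHG HI1; rewrite -HI1; apply: restrR hHG (sub_cG i).
split=> [R1G | i j | i]; rewrite ?inE.
- by apply/setP=> j; rewrite !inE (restr1 1%G) //; apply/val_inj/setI1g.
- by move=> RcG ji; rewrite (restr1 (c i)) //; apply/val_inj/tiC; rewrite eq_sym.
- by move=> RcG R1c; apply: transR R1c RcG.
Qed.

Lemma Tr_trans_relE R : R \in Tr G ->
  R = trans_rel (low_transfers R) (up_transfers R) ((1%G, G) \in R).
Proof.
move=> trR; have /transfer_systemP[sR reflR _ _ _] := trR.
apply/setP=> [[H K]]; apply/idP/idP => [hHK | ]; last first.
  rewrite inE /= => /or4P[/andP[/eqP-> /reflR //] | /andP[/eqP-> /imsetP[i + ->]] |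
                         /and3P[? /eqP-> /eqP->] | /andP[/imsetP[i + ->] /eqP->]] //.
  1, 2: by rewrite inE.
have /andP[sHK sKG] := sR _ _ hHK.
have [eK|eK|[j eK]] := subgroupsG sKG; rewrite eK in sHK hHK *.
- by move: sHK => /trivGP->; rewrite trans_rel_refl ?sub1G.
- have [eH|eH|[i eH]] := subgroupsG sHK; rewrite eH in hHK *.
  + by rewrite trans_rel_1G.
  + by rewrite trans_rel_refl.
  + by rewrite trans_rel_cG inE.
- have [eH|->] := subgroups_c sHK; last by rewrite trans_rel_refl.
  by rewrite eH trans_rel_1c inE -eH.
Qed.

Lemma trans_rel_trans S U b H K L : trans_admissible S U b ->
  (H, K) \in trans_rel S U b -> (K, L) \in trans_rel S U b -> (H, L) \in trans_rel S U b.
Proof.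
case=> _ _ compU hHK; have /andP[sHK sKG] := trans_rel_sub hHK.
have [eH|eH|[i eH]] := subgroupsG (subset_trans sHK sKG); rewrite eH in hHK *.
- move: hHK; rewrite trans_rel_1 => /or3P[/eqP-> // | /imsetP[i iS ->] | /andP[bT /eqP->]].
    rewrite trans_rel_c => /orP[/eqP-> | /andP[iU /eqP->]]; first by rewrite trans_rel_1c.
    by rewrite trans_rel_1G (compU i).
  by rewrite trans_rel_G => /eqP->; rewrite trans_rel_1G.
- by rewrite trans_rel_G in hHK; rewrite (eqP hHK).
move: hHK; rewrite trans_rel_c => /orP[/eqP-> // | /andP[iU /eqP->]].
by rewrite trans_rel_G => /eqP->; rewrite trans_rel_cG.
Qed.

Lemma trans_rel_restr S U b H K L : trans_admissible S U b ->
  (H, K) \in trans_rel S U b -> L \subset K -> ((H :&: L)%G, L) \in trans_rel S U b.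
Proof.
case=> allS lowU _ hHK sLK; have /andP[sHK sKG] := trans_rel_sub hHK.
have sLG := subset_trans sLK sKG.
have capEr (A B : {group gT}) : B \subset A -> (A :&: B)%G = B.
  by move=> sBA; apply/val_inj/setIidPr.
have [eH|eH|[i eH]] := subgroupsG (subset_trans sHK sKG); rewrite eH in hHK sHK *.
- rewrite (_ : (1 :&: L)%G = 1%G); last exact/val_inj/setI1g.
  rewrite trans_rel_1; move: hHK; rewrite trans_rel_1.
  case/or3P=> [/eqP eK | /imsetP[i iS eK] | /andP[bT /eqP eK]]; rewrite eK in sLK.
  + by move/trivGP: sLK => ->; rewrite eqxx.
  + by have [->|->] := subgroups_c sLK; rewrite ?eqxx ?(mem_imset _ _ c_inj) ?iS ?orbT.
  + have [->|->|[j ->]] := subgroupsG sLG; first by rewrite eqxx.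
      by rewrite bT eqxx !orbT.
    by rewrite (mem_imset _ _ c_inj) (allS bT) inE orbT.
- by rewrite capEr // trans_rel_refl.
move: hHK; rewrite trans_rel_c => /orP[/eqP eK | /andP[iU /eqP eK]]; rewrite eK in sLK.
  by rewrite capEr // trans_rel_refl.
have [->|->|[j ->]] := subgroupsG sLG.
- by rewrite capEr ?sub1G // trans_rel_refl ?sub1G.
- by rewrite (_ : (c i :&: G)%G = c i) ?trans_rel_cG //; apply/val_inj/setIidPl/sub_cG.
have [<-|ji] := eqVneq j i; first by rewrite capEr // trans_rel_refl.
rewrite (_ : (c i :&: c j)%G = 1%G) ?trans_rel_1c ?(lowU i) //.
by apply/val_inj/tiC; rewrite eq_sym.
Qed.

Lemma trans_rel_Tr S U b : trans_admissible S U b -> trans_rel S U b \in Tr G.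
Proof.
move=> adm; apply/transfer_systemP; split=> [H K | H | H K L | H K L | H K g Gg hHK].
- exact: trans_rel_sub.
- exact: trans_rel_refl.
- exact: trans_rel_trans.
- exact: trans_rel_restr.
have conjE (A : {group gT}) : A \subset G -> (A :^ g)%G = A.
  by move=> sAG; apply/val_inj/(normsP (sub_abelian_norm abelG sAG)).
by have /andP[sHK sKG] := trans_rel_sub hHK; rewrite !conjE // (subset_trans sHK).
Qed.

Lemma trans_admissible_cases S U b : trans_admissible S U b ->
  [\/ U = set0 /\ b = false, exists i, [/\ S = ~: [set i], U = [set i] & b = false]
    | S = setT /\ b = true].
Proof.
case=> allS lowU compU; case: b allS compU => [allS _ | _ compU].
  by constructor 3; rewrite allS.
have [-> | /set0Pn[i iU]] := eqVneq U set0; first by constructor 1.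
have iNS : i \notin S by apply/negP => /(compU i iU).
have lowS j : j != i -> j \in S by apply: lowU.
constructor 2; exists i; split=> //; apply/setP=> j; rewrite !inE.
  by have [-> | /lowS ->] := eqVneq j i; first exact: negbTE.
apply/idP/eqP => [jU | -> //]; apply/eqP; apply: contraNT iNS => ij.
by apply: (lowU j); rewrite // eq_sym.
Qed.

Local Notation trB S := (trans_rel S set0 false).
Local Notation trM i := (trans_rel (~: [set i]) [set i] false).
Local Notation trT U := (trans_rel setT U true).

Definition TrB := [set trB S | S in [set: {set 'I_n}]].
Definition TrM := [set trM i | i in [set: 'I_n]].
Definition TrT := [set trT U | U in [set: {set 'I_n}]].

Lemma trB_Tr S : trB S \in Tr G.
Proof. by apply: trans_rel_Tr; split=> // i; rewrite inE. Qed.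

Lemma trM_Tr i : trM i \in Tr G.
Proof. by apply: trans_rel_Tr; split=> // [j k | j]; rewrite !inE => /eqP-> //; rewrite eqxx. Qed.

Lemma trT_Tr U : trT U \in Tr G.
Proof. by apply: trans_rel_Tr; split=> // i j; rewrite inE. Qed.

Lemma Tr_cases R : R \in Tr G ->
  [\/ exists S, R = trB S, exists i, R = trM i | exists U, R = trT U].
Proof.
move=> trR; rewrite (Tr_trans_relE trR).
case: (trans_admissible_cases (Tr_admissible trR)) => [[-> ->] | [i [-> -> ->]] | [-> ->]].
- by constructor 1; exists (low_transfers R).
- by constructor 2; exists i.
- by constructor 3; exists (up_transfers R).
Qed.

Lemma mem_TrB S : trB S \in TrB. Proof. exact: imset_f. Qed.
Lemma mem_TrM i : trM i \in TrM. Proof. exact: imset_f. Qed.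
Lemma mem_TrT U : trT U \in TrT. Proof. exact: imset_f. Qed.

Lemma TrE : Tr G = TrB :|: TrM :|: TrT.
Proof.
apply/setP=> R; apply/idP/idP => [/Tr_cases[[S ->] | [i ->] | [U ->]] | ].
1-3: by rewrite !in_setU ?mem_TrB ?mem_TrM ?mem_TrT ?orbT.
by rewrite !in_setU => /orP[/orP[] | ] /imsetP[? _ ->]; rewrite ?trB_Tr ?trM_Tr ?trT_Tr.
Qed.

Lemma trB_inj : injective (fun S => trB S).
Proof. by move=> S S' /trans_rel_inj[]. Qed.

Lemma trM_inj : injective (fun i => trM i).
Proof. by move=> i j /trans_rel_inj[_ /set1_inj]. Qed.

Lemma trT_inj : injective (fun U => trT U).
Proof. by move=> U U' /trans_rel_inj[]. Qed.

Lemma disjoint_TrB_TrM : [disjoint TrB & TrM].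
Proof.
apply/pred0P=> R; rewrite !inE; apply/andP => [[/imsetP[S _ ->] /imsetP[i _]]].
by case/trans_rel_inj=> _ /setP/(_ i); rewrite !inE eqxx.
Qed.

Lemma disjoint_TrB_TrT : [disjoint TrB & TrT].
Proof.
apply/pred0P=> R; rewrite !inE; apply/andP => [[/imsetP[S _ ->] /imsetP[U _]]].
by case/trans_rel_inj.
Qed.

Lemma disjoint_TrM_TrT : [disjoint TrM & TrT].
Proof.
apply/pred0P=> R; rewrite !inE; apply/andP => [[/imsetP[i _ ->] /imsetP[U _]]].
by case/trans_rel_inj.
Qed.

Lemma card_Tr : #|Tr G| = (2 ^ n + n + 2 ^ n)%N.
Proof.
rewrite TrE !cardsU setIUl (disjoint_setI0 disjoint_TrB_TrM) (disjoint_setI0 disjoint_TrB_TrT).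
rewrite (disjoint_setI0 disjoint_TrM_TrT) setU0 cards0 !subn0.
rewrite (card_imset _ trB_inj) (card_imset _ trM_inj) (card_imset _ trT_inj).
by rewrite !cardsT card_set card_ord.
Qed.

Lemma TrB_sub_Tr : TrB \subset Tr G.
Proof. by apply/subsetP=> _ /imsetP[S _ ->]; apply: trB_Tr. Qed.

Lemma TrT_sub_Tr : TrT \subset Tr G.
Proof. by apply/subsetP=> _ /imsetP[U _ ->]; apply: trT_Tr. Qed.

Lemma covin_TrB X Y : Y \in TrB -> covin (Tr G) X Y = covin TrB X Y.
Proof.
case/imsetP=> S' _ ->; apply: covin_interval TrB_sub_Tr _.
move=> _ /Tr_cases[[S ->] | [i ->] | [U ->]] _; rewrite ?mem_TrB //.
all: by rewrite trans_rel_subset ?sub1set ?inE ?andbF.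
Qed.

Lemma covin_TrT X Y : X \in TrT -> covin (Tr G) X Y = covin TrT X Y.
Proof.
case/imsetP=> U' _ ->; apply: covin_interval TrT_sub_Tr _.
move=> _ /Tr_cases[[S ->] | [i ->] | [U ->]]; rewrite ?mem_TrT //.
all: by rewrite trans_rel_subset ?andbF.
Qed.

Lemma trB_proper S S' : (trB S \proper trB S') = (S \proper S').
Proof. by rewrite !properE !trans_rel_subset !subxx !andbT. Qed.

Lemma trT_proper U U' : (trT U \proper trT U') = (U \proper U').
Proof. by rewrite !properE !trans_rel_subset !subxx /= !andbT. Qed.

Lemma trM_proper i j : (trM i \proper trM j) = false.
Proof.
rewrite properE !trans_rel_subset !sub1set !inE /= !andbT.
by have [-> | ] := eqVneq i j; rewrite ?subxx ?andbF.
Qed.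

Lemma trB_proper_trM S j : (trB S \proper trM j) = (S \subset ~: [set j]).
Proof. by rewrite properE !trans_rel_subset sub0set sub1set inE /= andbF !andbT. Qed.

Lemma trM_proper_trT i U : (trM i \proper trT U) = (i \in U).
Proof. by rewrite properE !trans_rel_subset subsetT sub1set /= !andbF !andbT. Qed.

Lemma trB_proper_trT S U : trB S \proper trT U.
Proof. by rewrite properE !trans_rel_subset subsetT sub0set /= !andbF. Qed.

Lemma covin_trB_trM S j : covin (Tr G) (trB S) (trM j) = (S == ~: [set j]).
Proof.
apply/covinP/eqP => [[_ _ + noZ] | ->].
  rewrite trB_proper_trM => sS; apply/eqP; rewrite eqEproper sS; apply/negP => pS.
  by have := noZ _ (trB_Tr (~: [set j])); rewrite trB_proper pS trB_proper_trM subxx => /(_ isT).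
split; rewrite ?trB_Tr ?trM_Tr ?trB_proper_trM //.
move=> _ /Tr_cases[[S' ->] | [i ->] | [U ->]]; rewrite ?trM_proper //.
  rewrite trB_proper trB_proper_trM => pS; apply/negP => /(proper_sub_trans pS).
  by rewrite properxx.
by rewrite [trT U \proper _]properE trans_rel_subset /= !andbF.
Qed.

Lemma covin_trM_trT i U : covin (Tr G) (trM i) (trT U) = (U == [set i]).
Proof.
apply/covinP/eqP => [[_ _ + noZ] | ->].
  rewrite trM_proper_trT => iU; apply/eqP; rewrite eq_sym eqEproper sub1set iU; apply/negP => pU.
  by have := noZ _ (trT_Tr [set i]); rewrite trT_proper pU !trM_proper_trT set11 => /(_ isT).
split; rewrite ?trM_Tr ?trT_Tr ?trM_proper_trT ?set11 //.
move=> _ /Tr_cases[[S ->] | [k ->] | [U' ->]]; rewrite ?trM_proper //.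
  by rewrite properE trans_rel_subset sub1set inE !andbF.
rewrite trM_proper_trT trT_proper -sub1set => sU'; apply/negP => /proper_sub_trans/(_ sU').
by rewrite properxx.
Qed.

Lemma covin_trB_trT S U : covin (Tr G) (trB S) (trT U) = (S == setT) && (U == set0).
Proof.
apply/covinP/andP => [[_ _ _ noZ] | [/eqP-> /eqP->]].
  have := noZ _ (trB_Tr setT); have := noZ _ (trT_Tr set0).
  rewrite trB_proper !trB_proper_trT trT_proper properT proper0.
  by move=> /(_ isT)/negPn U0 /contraNT/(_ isT) S1.
split; rewrite ?trB_Tr ?trT_Tr ?trB_proper_trT //.
move=> _ /Tr_cases[[S' ->] | [k ->] | [U' ->]].
- by rewrite trB_proper properE subsetT andbF.
- by rewrite trM_proper_trT inE.
- by rewrite trT_proper [_ \proper set0]properE sub0set andbF.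
Qed.

Lemma covin_Tr X Y : covin (Tr G) X Y =
  [|| covin TrB X Y, covin TrT X Y,
      [exists i, (X == trB (~: [set i])) && (Y == trM i)],
      [exists i, (X == trM i) && (Y == trT [set i])]
    | (X == trB setT) && (Y == trT set0)].
Proof.
apply/idP/idP => [cXY | ]; last first.
  case/orP=> [cB | /orP[cT | /orP[/existsP[i /andP[/eqP-> /eqP->]] |
                /orP[/existsP[i /andP[/eqP-> /eqP->]] | /andP[/eqP-> /eqP->]]]]].
  - by rewrite covin_TrB //; case/covinP: cB.
  - by rewrite covin_TrT //; case/covinP: cT.
  - by rewrite covin_trB_trM.
  - by rewrite covin_trM_trT.
  - by rewrite covin_trB_trT !eqxx.
have /covinP[XT YT _ _] := cXY.
case/Tr_cases: XT cXY => [[S ->] | [i ->] | [U ->]].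
all: case/Tr_cases: YT => [[S' ->] | [j ->] | [U' ->]].
- by rewrite (covin_TrB _ (mem_TrB S')) => cB; apply/orP; left.
- rewrite covin_trB_trM => /eqP->; do 2 (apply/orP; right); apply/orP; left.
  by apply/existsP; exists j; rewrite !eqxx.
- by rewrite covin_trB_trT => /andP[/eqP-> /eqP->]; rewrite !eqxx !orbT.
- by case/covinP=> _ _ /proper_sub; rewrite trans_rel_subset sub1set inE andbF.
- by case/covinP=> _ _; rewrite trM_proper.
- rewrite covin_trM_trT => /eqP->; do 3 (apply/orP; right); apply/orP; left.
  by apply/existsP; exists i; rewrite !eqxx.
- by case/covinP=> _ _ /proper_sub; rewrite trans_rel_subset /= !andbF.
- by case/covinP=> _ _ /proper_sub; rewrite trans_rel_subset /= !andbF.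
- by rewrite (covin_TrT _ (mem_TrT U)) => cT; apply/orP; right; apply/orP; left.
Qed.

Lemma Tr_diamond :
  #|Tr G| = (2 ^ n + n + 2 ^ n)%N /\
  exists (fB fT : {set 'I_n} -> grel_on gT) (m : 'I_n -> grel_on gT)
         (sigma : {perm 'I_n}),
    let B := [set fB X | X in [set: {set 'I_n}]] in
    let T := [set fT X | X in [set: {set 'I_n}]] in
    let M := [set m i | i in [set: 'I_n]] in
    [/\ (forall X Y, (fB X \subset fB Y) = (X \subset Y)),
        (forall X Y, (fT X \subset fT Y) = (X \subset Y)),
        injective m,
        Tr G = B :|: M :|: T /\
        [/\ [disjoint B & M], [disjoint B & T] & [disjoint M & T]] &
        forall X Y, covin (Tr G) X Y =
          [|| covin B X Y, covin T X Y,
              [exists i, (X == fB (~: [set i])) && (Y == m i)],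
              [exists i, (X == m i) && (Y == fT [set sigma i])]
            | (X == fB setT) && (Y == fT set0)]].
Proof.
split; first exact: card_Tr.
exists (fun S => trB S), (fun U => trT U), (fun i => trM i), 1; split.
- by move=> S S'; rewrite trans_rel_subset subxx andbT.
- by move=> U U'; rewrite trans_rel_subset !subxx /= andbT.
- exact: trM_inj.
- split; first exact: TrE.
  by split; [exact: disjoint_TrB_TrM | exact: disjoint_TrB_TrT | exact: disjoint_TrM_TrT].
move=> X Y; rewrite covin_Tr; congr [|| _, _, _, _ | _].
by apply: eq_existsb => i; rewrite perm1.
Qed.

End DiamondTransferSystems.

Lemma p2Elem_diamond (gT : finGroupType) (p : nat) (G : {group gT}) :
  G \in 'E_p^2(G) ->
  exists c : 'I_p.+1 -> {group gT},
    [/\ forall i, c i \subset G, forall i, c i != 1%G, forall i, c i != G,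
        forall i j, i != j -> c i :&: c j = 1
      & forall H : {group gT}, H \subset G -> [\/ H = 1%G, H = G | exists i, H = c i]].
Proof.
move=> E_p2; have cardE := card_p1Elem_p2Elem E_p2.
pose c i := enum_val (cast_ord (esym cardE) i).
have cE i : c i \in 'E_p^1(G) by apply: enum_valP.
have c_inj : injective c by move=> i j /enum_val_inj/cast_ord_inj.
exists c; split=> [i | i | i | i j ij | H /(p2Elem_subgroups E_p2)[-> | -> | HE]].
- by case/pnElemP: (cE i).
- by apply: contraNneq (nt_pnElem (cE i) isT) => ->.
- by apply: contraNneq (p1Elem_p2Elem_neq E_p2 (cE i)) => ->.
- by apply/(TIp1ElemP (cE i) (cE j)); apply: contra ij => /eqP/val_inj/c_inj->.
- by constructor 1.
- by constructor 2.
constructor 3; exists (cast_ord cardE (enum_rank_in HE H)).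
by rewrite /c cast_ordK enum_rankK_in.
Qed.

Theorem theorem5p4 (p : nat) (gT : finGroupType) (G : {group gT}) :
  prime p -> G \isog [set: 'Z_p * 'Z_p] ->
  #|Tr G| = (2 ^ p.+2 + p + 1)%N /\
  exists (fB fT : {set 'I_p.+1} -> grel_on gT) (m : 'I_p.+1 -> grel_on gT)
         (sigma : {perm 'I_p.+1}),
    let B := [set fB X | X in [set: {set 'I_p.+1}]] in
    let T := [set fT X | X in [set: {set 'I_p.+1}]] in
    let M := [set m i | i in [set: 'I_p.+1]] in
    [/\ (* B and T are subposets isomorphic to the Boolean lattice [1]^(p+1) *)
        (forall X Y, (fB X \subset fB Y) = (X \subset Y)),
        (forall X Y, (fT X \subset fT Y) = (X \subset Y)),
        (* M has p+1 elements *)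
        injective m,
        (* Tr(G) is the disjoint union of B, M, T *)
        Tr G = B :|: M :|: T /\
        [/\ [disjoint B & M], [disjoint B & T] & [disjoint M & T]] &
        (* the covering relations of Tr(G) *)
        forall X Y, covin (Tr G) X Y =
          [|| covin B X Y, covin T X Y,
              [exists i, (X == fB (~: [set i])) && (Y == m i)],
              [exists i, (X == m i) && (Y == fT [set sigma i])]
            | (X == fB setT) && (Y == fT set0)]].
Proof.
move=> p_pr isoG; have E_p2 := p2Elem_isog_Zp2 p_pr isoG.
have abelG : abelian G by case/pnElemP: E_p2 => _ /abelem_abelian.
have ntG : G != 1%G by apply: contraNneq (nt_pnElem E_p2 isT) => ->.
have [c [sub_cG ntc c_neqG tiC subgroupsG]] := p2Elem_diamond E_p2.
have [-> trG] := Tr_diamond abelG ntG sub_cG ntc c_neqG tiC subgroupsG.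
by split=> //; rewrite addnAC addnS addn1 addnn -mul2n -expnS.
Qed.
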